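(* Let $P(z_1,\dots,z_n)=\sum_{S\subseteq[n]}p_S\prod_{i\in S}z_i$ with $p_S\in\mathbb R\setminus\{0\}$ and $p_S=p_{[n]\setminus S}$ for all $S\subseteq[n]$. For each $j$ write $P=A_jz_j+B_j$ with $A_j,B_j$ multilinear in the variables $z_i$, $i\ne j$, and assume that for every $j$, $A_j\ne0$ whenever $|z_i|\ge1$ for all $i\neq j$. Then $P$ has the Lee-Yang property.
   Context: A multilinear polynomial $P(z_1,\dots,z_n)$ has the Lee-Yang property if $P(\lambda_1,\dots,\lambda_n)\neq0$ whenever $|\lambda_i|\ge1$ for all $i$ and $|\lambda_i|>1$ for at least one $i$. *)

(* Complex numbers: an arbitrary numClosedFieldType C
   (e.g. the complex numbers); real coefficients = elements of Num.real. *)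
From HB Require Import structures.
From mathcomp Require Import all_boot all_order all_algebra.
Set Implicit Arguments. Unset Strict Implicit. Unset Printing Implicit Defensive.
Import Order.TTheory GRing.Theory Num.Theory.
Local Open Scope ring_scope.

Definition mpoly_eval (C : numClosedFieldType) (n : nat)
  (p : {set 'I_n} -> C) (z : 'I_n -> C) : C :=
  \sum_(S : {set 'I_n}) p S * \prod_(i in S) z i.

(* The coefficient A_j of z_j in P = A_j z_j + B_j, evaluated at z
   (it does not depend on z j). *)
Definition mpoly_coef_A (C : numClosedFieldType) (n : nat)
  (p : {set 'I_n} -> C) (j : 'I_n) (z : 'I_n -> C) : C :=
  \sum_(S : {set 'I_n} | j \in S) p S * \prod_(i in S :\ j) z i.

Definition LeeYang (C : numClosedFieldType) (n : nat) (P : ('I_n -> C) -> C) : Prop :=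
  forall z : 'I_n -> C,
    (forall i, 1 <= `|z i|) -> (exists i, 1 < `|z i|) -> P z != 0.

(* It suffices that |B_j| <= |A_j| whenever |z_i| >= 1
   for all i != j, since then z_j A_j + B_j != 0 as soon as |z_j| > 1.  On the torus
   the symmetry p_S = p_(~S) of the real coefficients gives |B_j| = |A_j|.  Away
   from it, isolate one more variable: A_j = a z_k + b and B_j = c z_k + d.  The
   hypothesis on A_j and A_k forces a != 0 (by pushing z outward along a ray) and
   |b|, |c| < |a|, so (c w + d) / (a w + b) has its pole inside the unit disk and,
   by the maximum principle, the bound |c w + d| <= |a w + b| on the circle
   |w| = 1 extends to |w| >= 1.  Induction on the number of variables off the unit
   circle concludes. *)

From HB Require Import structures.
From mathcomp Require Import all_boot all_order all_algebra.
From mathcomp Require Import ring.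
Set Implicit Arguments. Unset Strict Implicit. Unset Printing Implicit Defensive.
Import Order.TTheory GRing.Theory Num.Theory.
Local Open Scope ring_scope.

Lemma quadratic_ge0_right (R : numDomainType) (a k b rho r : R) :
  0 < a -> rho < 1 -> 1 <= r ->
  a * rho ^+ 2 - 2 * k * rho + b <= 0 -> 0 <= a - 2 * k + b ->
  0 <= a * r ^+ 2 - 2 * k * r + b.
Proof.
move=> a_gt0 rho_lt1 r_ge1 q_rho q_1.
have slope1 : 0 <= a * (1 + rho) - 2 * k.
  have e : (a - 2 * k + b) - (a * rho ^+ 2 - 2 * k * rho + b)
         = (1 - rho) * (a * (1 + rho) - 2 * k) by ring.
  rewrite -(pmulr_rge0 _ (x := 1 - rho)) ?subr_gt0 // -e.
  by rewrite subr_ge0 (le_trans q_rho).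
have e : (a * r ^+ 2 - 2 * k * r + b) - (a - 2 * k + b)
       = (r - 1) * ((a * (1 + rho) - 2 * k) + a * (r - rho)) by ring.
rewrite -[_ + b](subrK (a - 2 * k + b)) e.
have r_ge_rho : rho <= r := le_trans (ltW rho_lt1) r_ge1.
rewrite addr_ge0 // mulr_ge0 ?subr_ge0 //.
by rewrite addr_ge0 // mulr_ge0 ?subr_ge0 // ltW.
Qed.

Section AffineMaps.
Variable C : numClosedFieldType.
Implicit Types a b c d u w y : C.

Lemma add_conjC_ge y : - (2 * `|y|) <= y + y^*.
Proof.
have -> : y + y^* = 2 * 'Re y by rewrite ReE mulrC mulfVK // pnatr_eq0.
rewrite -mulrN ler_pM2l ?ltr0n // lerNl.
apply: le_trans (leif_normC_Re_Creal y).1.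
by rewrite -normrN real_ler_norm ?rpredN ?Creal_Re.
Qed.

Lemma sqr_norm_affineB a b c d w :
  `|a * w + b| ^+ 2 - `|c * w + d| ^+ 2 =
  (`|a| ^+ 2 - `|c| ^+ 2) * `|w| ^+ 2
  + ((a * b^* - c * d^*) * w + ((a * b^* - c * d^*) * w)^*)
  + (`|b| ^+ 2 - `|d| ^+ 2).
Proof.
(* restated so that [ring] sees the conjugation symbol itself, not the
   morphism structure that [rmorphD] etc. would leave behind *)
have conjD x y : (x + y)^* = x^* + y^* := rmorphD _ x y.
have conjN x : (- x)^* = - x^* := rmorphN _ x.
have conjM x y : (x * y)^* = x^* * y^* := rmorphM _ x y.
by rewrite !normCK !(conjD, conjN, conjM, conjCK); ring.
Qed.

(* [|a w + b|^2 - |c w + d|^2] is bounded below by a quadratic in [|w|] with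
   positive leading coefficient, which is nonpositive at the pole [|- b / a| < 1]
   and nonnegative at [1] (take [w] on the circle), hence nonnegative beyond [1]. *)
Lemma affine_norm_le_outside_disk a b c d :
  `|b| < `|a| -> `|c| < `|a| ->
  (forall u, `|u| = 1 -> `|c * u + d| <= `|a * u + b|) ->
  forall w, 1 <= `|w| -> `|c * w + d| <= `|a * w + b|.
Proof.
move=> ba ca circle w w_ge1.
have a_neq0 : a != 0 by rewrite -normr_eq0 gt_eqF // (le_lt_trans _ ba).
set A0 := `|a| ^+ 2 - `|c| ^+ 2; set B0 := `|b| ^+ 2 - `|d| ^+ 2.
set K := a * b^* - c * d^*.
have D_ge x : A0 * `|x| ^+ 2 - 2 * `|K| * `|x| + B0
              <= `|a * x + b| ^+ 2 - `|c * x + d| ^+ 2.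
  by rewrite sqr_norm_affineB lerD2r lerD2l -mulrA -normrM add_conjC_ge.
have D_ge0_le x : 0 <= `|a * x + b| ^+ 2 - `|c * x + d| ^+ 2 ->
                  `|c * x + d| <= `|a * x + b|.
  by rewrite subr_ge0 ler_sqr ?nnegrE.
apply/D_ge0_le/(le_trans _ (D_ge w)).
set w0 := - b / a.
have rho_lt1 : `|w0| < 1.
  by rewrite normf_div normrN ltr_pdivrMr ?normr_gt0 // mul1r.
have q_rho : A0 * `|w0| ^+ 2 - 2 * `|K| * `|w0| + B0 <= 0.
  apply: le_trans (D_ge w0) _.
  by rewrite /w0 mulrC divfK // addNr normr0 expr0n sub0r oppr_le0 exprn_ge0.
have q_1 : 0 <= A0 - 2 * `|K| + B0.
  (* the point of the circle where [Re (K u)] is minimal *)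
  have [u [u1 Ku]] : exists u, `|u| = 1 /\ K * u + (K * u)^* = - (2 * `|K|).
    have [->|K_neq0] := eqVneq K 0.
      by exists 1; rewrite normr1 normr0 !mul0r conjC0 addr0 mulr0 oppr0.
    have K_gt0 : 0 < `|K| by rewrite normr_gt0.
    exists (- K^* / `|K|); split.
      by rewrite normf_div normrN norm_conjC normr_id divff // gt_eqF.
    have -> : K * (- K^* / `|K|) = - `|K|.
      by rewrite mulrA mulrN -normCK mulNr expr2 mulfK ?gt_eqF.
    by rewrite conj_Creal ?realN ?normr_real // mulr2n mulrDl !mul1r opprD.
  have := circle u u1; rewrite -ler_sqr ?nnegrE // -subr_ge0.
  by rewrite sqr_norm_affineB u1 expr1n mulr1 Ku.
apply: quadratic_ge0_right q_rho q_1 => //.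
by rewrite subr_gt0 ltr_sqr ?nnegrE.
Qed.

Lemma norm_lt_of_affine_neq0 a b :
  a != 0 -> (forall w, 1 <= `|w| -> a * w + b != 0) -> `|b| < `|a|.
Proof.
move=> a_neq0 h; rewrite real_ltNge ?normr_real //; apply/negP => ab.
have w_ge1 : 1 <= `|- b / a|.
  by rewrite normf_div normrN ler_pdivlMr ?normr_gt0 // mul1r.
by have := h _ w_ge1; rewrite [a * _]mulrC divfK // addNr eqxx.
Qed.

Lemma affine_neq0_outside_disk a b w :
  a != 0 -> `|b| <= `|a| -> 1 < `|w| -> w * a + b != 0.
Proof.
move=> a_neq0 ba w_gt1; rewrite addr_eq0; apply/eqP => wab.
have : `|w| * `|a| <= `|a| by rewrite -normrM wab normrN.
by rewrite ger_pMl ?normr_gt0 // => /(lt_le_trans w_gt1); rewrite ltxx.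
Qed.

End AffineMaps.

Section PolyNearRoot.
Variable R : numFieldType.
Implicit Types (a b q : {poly R}) (c t : R).

Lemma norm_hornerB0_le q t : 0 <= t -> t <= 1 ->
  `|q.[t] - q.[0]| <= t * \sum_(i < size q) `|q`_i|.
Proof.
move=> t_ge0 t_le1; rewrite !horner_coef -sumrB mulr_sumr.
apply: le_trans (ler_norm_sum _ _ _) (ler_sum _ _) => i _.
rewrite -mulrBr normrM mulrC ler_wpM2r //.
case: (nat_of_ord i) => [|m]; first by rewrite !expr0 subrr normr0.
rewrite expr0n subr0 ger0_norm ?exprn_ge0 // exprS -[leRHS]mulr1.
by rewrite ler_wpM2l // exprn_ile1.
Qed.

Lemma poly_nonroot_in q c : q != 0 -> 0 < c ->
  exists2 t, 0 < t <= c & ~~ root q t.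
Proof.
move=> q_neq0 c_gt0.
set ts := [seq c / i.+1%:R | i <- iota 0 (size q)].
have /allPn [_ /mapP [i _ ->] not_root] : ~~ all (root q) ts.
  have ts_uniq : uniq ts.
    rewrite map_inj_uniq ?iota_uniq // => i j /(mulfI (lt0r_neq0 c_gt0)).
    by move/invr_inj/eqP; rewrite eqr_nat => /eqP [].
  apply/negP => all_roots; have := max_poly_roots q_neq0 all_roots ts_uniq.
  by rewrite size_map size_iota ltnn.
exists (c / i.+1%:R) => //; rewrite divr_gt0 ?ltr0Sn //=.
by rewrite ler_pdivrMr ?ltr0Sn // ler_peMr ?(ltW c_gt0) // ler1n.
Qed.

(* On [1, 1 + t], [|a|] grows at most linearly from [0] while [|b|] stays near
   [|b.[1]| > 0]; among [size a] candidate points one is not a root of [a]. *)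
Lemma poly_dominated_right_of_root a b : a != 0 -> root a 1 -> b.[1] != 0 ->
  exists s, [/\ 1 <= s, a.[s] != 0 & `|a.[s]| <= `|b.[s]|].
Proof.
move=> a_neq0 /eqP a1 b1.
set A := a \Po ('X + 1); set B := b \Po ('X + 1).
have shift q t : (q \Po ('X + 1)).[t] = q.[t + 1] by rewrite horner_comp !hornerE.
set MA := \sum_(i < size A) `|A`_i|; set MB := \sum_(i < size B) `|B`_i|.
have M_ge0 : 0 <= MA + MB by rewrite addr_ge0 ?sumr_ge0.
have b1_gt0 : 0 < `|b.[1]| by rewrite normr_gt0.
set c := `|b.[1]| / (MA + MB + `|b.[1]|).
have den_gt0 : 0 < MA + MB + `|b.[1]| by rewrite ltr_wpDl.
have c_gt0 : 0 < c by rewrite divr_gt0.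
have c_le1 : c <= 1 by rewrite ler_pdivrMr // mul1r lerDr.
have cM : c * (MA + MB) <= `|b.[1]|.
  by rewrite mulrAC ler_pdivrMr // ler_wpM2l ?ltW // ltrDl.
have A_neq0 : A != 0 by rewrite comp_poly2_eq0 ?size_XaddC.
have [t /andP [t_gt0 t_le_c] A_t] := poly_nonroot_in A_neq0 c_gt0.
have t_le1 : t <= 1 := le_trans t_le_c c_le1.
have A0 : A.[0] = 0 by rewrite shift add0r.
have B0 : B.[0] = b.[1] by rewrite shift add0r.
have A_small : `|A.[t]| <= t * MA.
  by have := norm_hornerB0_le A (ltW t_gt0) t_le1; rewrite A0 subr0.
have B_large : `|b.[1]| - t * MB <= `|B.[t]|.
  have := norm_hornerB0_le B (ltW t_gt0) t_le1; rewrite B0.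
  rewrite lerBlDr => /(lerD (lexx `|B.[t]|)); apply: le_trans.
  by have := ler_normB B.[t] (B.[t] - b.[1]); rewrite subKr.
exists (t + 1); split; [by rewrite lerDr ltW | by rewrite -shift |].
rewrite -!shift (le_trans A_small) // (le_trans _ B_large) // lerBrDr.
by rewrite -mulrDr (le_trans _ cM) // ler_wpM2r.
Qed.

End PolyNearRoot.

Section Multilinear.
Variables (C : numClosedFieldType) (n : nat).
Implicit Types (q : {set 'I_n} -> C) (S : {set 'I_n}) (z : 'I_n -> C).
Implicit Types (i j k : 'I_n) (w : C).

Definition set_var z k w : 'I_n -> C := fun i => if i == k then w else z i.

(* the part of [q] whose monomials contain [z_k] (when [b]) or omit it *)
Definition restrict q k (b : bool) : {set 'I_n} -> C :=
  fun S => if (k \in S) == b then q S else 0.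

Definition mpoly_coef_B q j z := mpoly_eval (restrict q j false) z.

Lemma set_var_eq z k w : set_var z k w k = w.
Proof. by rewrite /set_var eqxx. Qed.

Lemma set_var_neq z k w i : i != k -> set_var z k w i = z i.
Proof. by rewrite /set_var => /negbTE ->. Qed.

Lemma set_varC z j k v w : j != k ->
  set_var (set_var z j v) k w =1 set_var (set_var z k w) j v.
Proof.
move=> jk i; rewrite /set_var; case: eqP => [->|//].
by rewrite eq_sym (negbTE jk).
Qed.

Lemma eq_mpoly_eval q q' z z' : q =1 q' -> z =1 z' ->
  mpoly_eval q z = mpoly_eval q' z'.
Proof.
move=> eq_q eq_z; apply: eq_bigr => S _; rewrite eq_q.
by congr (_ * _); apply: eq_bigr.
Qed.

Lemma restrict_notin q k S : k \notin S -> restrict q k true S = 0.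
Proof. by rewrite /restrict => /negbTE ->. Qed.

Lemma restrict_in q k S : k \in S -> restrict q k false S = 0.
Proof. by rewrite /restrict => ->. Qed.

Lemma restrict0 q k b S : q S = 0 -> restrict q k b S = 0.
Proof. by rewrite /restrict => ->; case: ifP. Qed.

Lemma restrictC q j k b c :
  restrict (restrict q j b) k c =1 restrict (restrict q k c) j b.
Proof. by move=> S; rewrite /restrict; case: (_ == b); case: (_ == c). Qed.

Lemma mpoly_eval_restrict q k z : mpoly_eval q z =
  mpoly_eval (restrict q k true) z + mpoly_eval (restrict q k false) z.
Proof.
rewrite -big_split; apply: eq_bigr => S _ /=; rewrite /restrict.
by case: (k \in S); rewrite /= mul0r ?addr0 ?add0r.
Qed.

Lemma mpoly_eval_supp_in q k z : (forall S, k \notin S -> q S = 0) ->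
  mpoly_eval q z = z k * mpoly_eval q (set_var z k 1).
Proof.
move=> supp; rewrite mulr_sumr; apply: eq_bigr => S _.
have [kS|/supp ->] := boolP (k \in S); last by rewrite !mul0r mulr0.
rewrite !(bigD1 k kS) /= set_var_eq mul1r mulrCA; congr (_ * (_ * _)).
by apply: eq_bigr => i /andP [_ ik]; rewrite set_var_neq.
Qed.

Lemma mpoly_eval_supp_out q k z w : (forall S, k \in S -> q S = 0) ->
  mpoly_eval q (set_var z k w) = mpoly_eval q z.
Proof.
move=> supp; apply: eq_bigr => S _.
have [/supp ->|kS] := boolP (k \in S); first by rewrite !mul0r.
congr (_ * _); apply: eq_bigr => i iS; rewrite set_var_neq //.
by apply: contraNneq kS => <-.
Qed.

Lemma mpoly_coef_AE q j z :
  mpoly_coef_A q j z = mpoly_eval (restrict q j true) (set_var z j 1).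
Proof.
rewrite /mpoly_coef_A /mpoly_eval big_mkcond /=; apply: eq_bigr => S _.
rewrite /restrict; have [jS|jS] := boolP (j \in S); last by rewrite mul0r.
rewrite (bigD1 j jS) /= set_var_eq mul1r; congr (_ * _).
apply: eq_big => [i|i /setD1P [ij _]]; first by rewrite in_setD1 andbC.
by rewrite set_var_neq.
Qed.

Lemma mpoly_eval_coef q j z :
  mpoly_eval q z = z j * mpoly_coef_A q j z + mpoly_coef_B q j z.
Proof.
rewrite (mpoly_eval_restrict _ j) mpoly_coef_AE.
by rewrite (mpoly_eval_supp_in (k := j)) //; apply: restrict_notin.
Qed.

Lemma conj_mpoly_eval q z :
  (mpoly_eval q z)^* = mpoly_eval (fun S => (q S)^*) (fun i => (z i)^*).
Proof.
rewrite /mpoly_eval rmorph_sum; apply: eq_bigr => S _.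
by rewrite rmorphM rmorph_prod.
Qed.

Definition mpoly_ray q z : {poly C} :=
  \sum_(S : {set 'I_n}) (q S * \prod_(i in S) z i) *: 'X^#|S|.

Lemma horner_mpoly_ray q z s :
  (mpoly_ray q z).[s] = mpoly_eval q (fun i => s * z i).
Proof.
rewrite horner_sum; apply: eq_bigr => S _.
by rewrite hornerZ hornerXn big_split /= prodr_const [s ^+ _ * _]mulrC mulrA.
Qed.

Lemma coef_mpoly_ray_top q z : (mpoly_ray q z)`_n = q setT * \prod_i z i.
Proof.
rewrite coef_sum (bigD1 setT) //= coefZ coefXn cardsT card_ord eqxx mulr1.
rewrite [X in _ + X]big1 ?addr0 => [|S S_neq]; last first.
  rewrite coefZ coefXn; case: eqP => [cardS|]; last by rewrite mulr0.
  by move: S_neq; rewrite eqEcard subsetT cardsT card_ord -cardS leqnn.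
by congr (_ * _); apply: eq_bigl => i; rewrite in_setT.
Qed.

End Multilinear.

Lemma prod_mul_conj_unit (C : numClosedFieldType) (I : finType) (y : I -> C)
  (S : {set I}) : (forall i, `|y i| = 1) ->
  \prod_i y i * \prod_(i in S) (y i)^* = \prod_(i in ~: S) y i.
Proof.
move=> y1; rewrite (bigID (mem S)) /= mulrAC -big_split /= big1 ?mul1r.
  by apply: eq_bigl => i; rewrite in_setC.
by move=> i _; rewrite -normCK y1 expr1n.
Qed.

Section CoefficientBounds.
Variables (C : numClosedFieldType) (n : nat) (p : {set 'I_n} -> C).
Implicit Types (S : {set 'I_n}) (z : 'I_n -> C) (i j k : 'I_n).

(* the coefficient of [z_j^bj z_k^bk] in [mpoly_eval p], a polynomial in the
   other variables; meaningful for [j != k] *)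
Definition mpoly_coef2 j k (bj bk : bool) z :=
  mpoly_eval (restrict (restrict p j bj) k bk) (set_var (set_var z j 1) k 1).

Lemma mpoly_coef2C j k bj bk z :
  mpoly_coef2 j k bj bk z = mpoly_coef2 k j bk bj z.
Proof.
apply: eq_mpoly_eval => [|i]; first exact: restrictC.
by rewrite /set_var; case: (i == k); case: (i == j).
Qed.

Lemma mpoly_coef2_set_var j k bj bk z w :
  mpoly_coef2 j k bj bk (set_var z k w) = mpoly_coef2 j k bj bk z.
Proof.
apply: eq_mpoly_eval => // i; rewrite /set_var.
by case: eqP => // /eqP ik; case: (i == j) => //; rewrite (negbTE ik).
Qed.

Lemma mpoly_coef_A_bilin j k z : j != k ->
  mpoly_coef_A p j z =
  z k * mpoly_coef2 j k true true z + mpoly_coef2 j k true false z.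
Proof.
move=> jk; rewrite mpoly_coef_AE (mpoly_eval_restrict _ k).
rewrite (mpoly_eval_supp_in (k := k)) ?set_var_neq 1?eq_sym //; last first.
  exact: restrict_notin.
congr (_ + _); rewrite /mpoly_coef2 [RHS]mpoly_eval_supp_out //.
exact: restrict_in.
Qed.

Lemma mpoly_coef_B_bilin j k z : j != k ->
  mpoly_coef_B p j z =
  z k * mpoly_coef2 j k false true z + mpoly_coef2 j k false false z.
Proof.
move=> jk; rewrite /mpoly_coef_B /mpoly_coef2 (mpoly_eval_restrict _ k).
have supp_j b S : j \in S -> restrict (restrict p j false) k b S = 0.
  by move=> jS; apply/restrict0/restrict_in.
rewrite (mpoly_eval_supp_in (k := k)); last exact: restrict_notin.
rewrite [in RHS](eq_mpoly_eval (frefl _) (set_varC _ _ _ jk)).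
rewrite [in RHS]mpoly_eval_supp_out; last exact: supp_j.
rewrite [mpoly_eval _ (set_var (set_var z j 1) k 1)]mpoly_eval_supp_out; last first.
  exact: restrict_in.
by rewrite [mpoly_eval _ (set_var z j 1)]mpoly_eval_supp_out; last exact: supp_j.
Qed.

Hypothesis p_real : forall S, p S \is Num.real.
Hypothesis p_sym : forall S, p S = p (~: S).

(* On the torus [conj y_i = 1 / y_i]; reindexing by [S |-> ~: S], the symmetry
   and reality of [p] turn the monomials of [conj A_j] into those of [B_j]. *)
Lemma mpoly_coef_B_torus j z : (forall i, i != j -> `|z i| = 1) ->
  mpoly_coef_B p j z = \prod_i set_var z j 1 i * (mpoly_coef_A p j z)^*.
Proof.
move=> z1; set y := set_var z j 1.
have y1 i : `|y i| = 1.
  by rewrite /y /set_var; case: eqP => [_|/eqP /z1 //]; rewrite normr1.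
rewrite mpoly_coef_AE conj_mpoly_eval mulr_sumr /mpoly_coef_B /mpoly_eval.
rewrite (reindex_inj (@setC_inj _)) /=; apply: eq_bigr => S _.
rewrite /restrict in_setC; have [jS|jS] := boolP (j \in S) => /=; last first.
  by rewrite conjC0 !mul0r mulr0.
rewrite conj_Creal // -p_sym mulrCA prod_mul_conj_unit //.
congr (_ * _); apply: eq_bigr => i; rewrite in_setC => iS.
by rewrite /y set_var_neq //; apply: contraNneq iS => ->.
Qed.

Lemma norm_mpoly_coef_B_torus j z : (forall i, i != j -> `|z i| = 1) ->
  `|mpoly_coef_B p j z| = `|mpoly_coef_A p j z|.
Proof.
move=> z1; rewrite mpoly_coef_B_torus // normrM norm_conjC normr_prod.
rewrite big1 ?mul1r // => i _.
by rewrite /set_var; case: eqP => [_|/eqP /z1 //]; rewrite normr1.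
Qed.

Hypothesis p_nz : forall S, p S != 0.
Hypothesis hA : forall j z,
  (forall i, i != j -> 1 <= `|z i|) -> mpoly_coef_A p j z != 0.

Lemma norm_mpoly_coef2_lt j k z : j != k ->
  (forall i, i != j -> i != k -> 1 <= `|z i|) -> mpoly_coef2 j k true true z != 0 ->
  `|mpoly_coef2 j k true false z| < `|mpoly_coef2 j k true true z|.
Proof.
move=> jk z_ge1 a_neq0; apply: norm_lt_of_affine_neq0 a_neq0 _ => w w_ge1.
have zw_ge1 i : i != j -> 1 <= `|set_var z k w i|.
  by move=> ij; rewrite /set_var; have [|ik] := eqVneq i k; last exact: z_ge1.
have := hA zw_ge1.
by rewrite (mpoly_coef_A_bilin _ jk) set_var_eq !mpoly_coef2_set_var mulrC.
Qed.

(* If [mpoly_coef2 j k true true] vanished at [z], then slightly further out on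
   the ray through [z] it would be nonzero but no larger than
   [mpoly_coef2 j k true false], contradicting [norm_mpoly_coef2_lt].  The ray is
   nondegenerate because its top coefficient [p setT] is nonzero. *)
Lemma mpoly_coef2_neq0 j k z : j != k ->
  (forall i, i != j -> i != k -> 1 <= `|z i|) -> mpoly_coef2 j k true true z != 0.
Proof.
move=> jk z_ge1; apply/negP => /eqP a0.
set y := set_var (set_var z j 1) k 1.
set qa := restrict (restrict p j true) k true.
set qb := restrict (restrict p j true) k false.
have ray1 q : (mpoly_ray q y).[1] = mpoly_eval q y.
  by rewrite horner_mpoly_ray; apply: eq_mpoly_eval => // i; rewrite mul1r.
have a_neq0 : mpoly_ray qa y != 0.
  have top : (mpoly_ray qa y)`_n != 0.
    have qa_top : qa setT = p setT by rewrite /qa /restrict !in_setT.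
    rewrite coef_mpoly_ray_top qa_top mulf_neq0 //.
    apply/prodf_neq0 => i _; rewrite /y /set_var.
    have [_|ik] := eqVneq i k; first exact: oner_neq0.
    have [_|ij] := eqVneq i j; first exact: oner_neq0.
    by rewrite -normr_eq0 gt_eqF // (lt_le_trans ltr01) ?z_ge1.
  by apply: contraNneq top => ->; rewrite coef0.
have b1 : (mpoly_ray qb y).[1] != 0.
  have zk_ge1 i : i != j -> 1 <= `|set_var z k 1 i|.
    move=> ij; rewrite /set_var; have [_|ik] := eqVneq i k; first by rewrite normr1.
    exact: z_ge1.
  have := hA zk_ge1.
  by rewrite (mpoly_coef_A_bilin _ jk) !mpoly_coef2_set_var a0 mulr0 add0r ray1.
have a1 : root (mpoly_ray qa y) 1 by apply/eqP; rewrite ray1.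
have [s [s_ge1 a_s a_le_b]] := poly_dominated_right_of_root a_neq0 a1 b1.
have s_gt0 : 0 < s := lt_le_trans ltr01 s_ge1.
set x := fun i => s * y i.
have xj : x j = s by rewrite /x /y /= set_var_neq // set_var_eq mulr1.
have xk : x k = s by rewrite /x /y /= set_var_eq mulr1.
have supp_j b S : j \notin S -> restrict (restrict p j true) k b S = 0.
  by move=> jS; apply/restrict0/restrict_notin.
have ea : (mpoly_ray qa y).[s] = s * s * mpoly_coef2 j k true true x.
  rewrite horner_mpoly_ray -/x (mpoly_eval_supp_in (k := j)); last exact: supp_j.
  rewrite (mpoly_eval_supp_in (k := k)); last exact: restrict_notin.
  by rewrite set_var_neq 1?eq_sym // xj xk mulrA.
have eb : (mpoly_ray qb y).[s] = s * mpoly_coef2 j k true false x.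
  rewrite horner_mpoly_ray -/x (mpoly_eval_supp_in (k := j)); last exact: supp_j.
  by rewrite xj /mpoly_coef2 [in RHS]mpoly_eval_supp_out //; apply: restrict_in.
have ax_neq0 : mpoly_coef2 j k true true x != 0.
  by move: a_s; rewrite ea !mulf_eq0 !negb_or => /andP [_].
have x_ge1 i : i != j -> i != k -> 1 <= `|x i|.
  move=> ij ik; rewrite /x /y /= !set_var_neq // normrM (ger0_norm (ltW s_gt0)).
  exact: mulr_ege1 s_ge1 (z_ge1 _ ij ik).
have : `|mpoly_coef2 j k true true x| <= `|mpoly_coef2 j k true false x|.
  move: a_le_b; rewrite ea eb !normrM (ger0_norm (ltW s_gt0)) -mulrA ler_pM2l //.
  by apply: le_trans; rewrite ler_peMl.
by move/(lt_le_trans (norm_mpoly_coef2_lt jk x_ge1 ax_neq0)); rewrite ltxx.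
Qed.

Lemma norm_mpoly_coef_B_le_step j k z : j != k ->
  (forall i, i != j -> 1 <= `|z i|) ->
  (forall u, `|u| = 1 ->
     `|mpoly_coef_B p j (set_var z k u)| <= `|mpoly_coef_A p j (set_var z k u)|) ->
  `|mpoly_coef_B p j z| <= `|mpoly_coef_A p j z|.
Proof.
move=> jk z_ge1 circle.
have zjk_ge1 i : i != j -> i != k -> 1 <= `|z i| by move=> ij _; apply: z_ge1.
have zkj_ge1 i : i != k -> i != j -> 1 <= `|z i| by move=> _; apply: z_ge1.
have a_neq0 := mpoly_coef2_neq0 jk zjk_ge1.
have ba := norm_mpoly_coef2_lt jk zjk_ge1 a_neq0.
have ca : `|mpoly_coef2 j k false true z| < `|mpoly_coef2 j k true true z|.
  have kj : k != j by rewrite eq_sym.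
  rewrite mpoly_coef2C [mpoly_coef2 j k true true z]mpoly_coef2C.
  by rewrite norm_mpoly_coef2_lt // mpoly_coef2C.
rewrite (mpoly_coef_A_bilin _ jk) (mpoly_coef_B_bilin _ jk) ![z k * _]mulrC.
apply: (affine_norm_le_outside_disk ba ca); last by rewrite z_ge1 // eq_sym.
move=> u u1; have := circle u u1.
rewrite (mpoly_coef_A_bilin _ jk) (mpoly_coef_B_bilin _ jk) set_var_eq.
by rewrite !mpoly_coef2_set_var ![u * _]mulrC.
Qed.

Definition off_circle j z := [set i | (i != j) && (`|z i| != 1)].

Lemma norm_mpoly_coef_B_le j z : (forall i, i != j -> 1 <= `|z i|) ->
  `|mpoly_coef_B p j z| <= `|mpoly_coef_A p j z|.
Proof.
have [m] := ubnP #|off_circle j z|; elim: m z => // m IH z card_lt z_ge1.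
have [off0|[k]] := set_0Vmem (off_circle j z).
  rewrite norm_mpoly_coef_B_torus // => i ij; have := in_set0 i.
  by rewrite -off0 inE ij => /negbFE /eqP.
rewrite inE => /andP [kj zk_neq1].
apply: (@norm_mpoly_coef_B_le_step _ k) => // [|u u1]; first by rewrite eq_sym.
apply: IH => [|i ij]; last first.
  by rewrite /set_var; have [_|ik] := eqVneq i k; [rewrite u1 | apply: z_ge1].
have sub : off_circle j (set_var z k u) \subset off_circle j z :\ k.
  apply/subsetP => i; rewrite !inE /set_var.
  by have [->|ik] := eqVneq i k; first by rewrite u1 eqxx andbF.
rewrite -ltnS (leq_trans _ card_lt) // ltnS [#|off_circle j z|](cardsD1 k).
rewrite inE kj zk_neq1 add1n ltnS.
exact: subset_leq_card.
Qed.

End CoefficientBounds.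

Theorem lemma4p7 (C : numClosedFieldType) (n : nat) (p : {set 'I_n} -> C)
  (p_real : forall S, p S \is Num.real)
  (p_nz : forall S, p S != 0)
  (p_sym : forall S, p S = p (~: S))
  (hA : forall (j : 'I_n) (z : 'I_n -> C),
          (forall i, i != j -> 1 <= `|z i|) -> mpoly_coef_A p j z != 0) :
  LeeYang (mpoly_eval p).
Proof.
move=> z z_ge1 [k zk_gt1].
have A_neq0 : mpoly_coef_A p k z != 0 by apply: hA => i _; apply: z_ge1.
have BA := norm_mpoly_coef_B_le p_real p_sym p_nz hA (j := k) (fun i _ => z_ge1 i).
by rewrite (mpoly_eval_coef _ k) affine_neq0_outside_disk.
Qed.
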